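(* Let $\{\mathbb{G}_n,\ n=2,3,\ldots\}$ be a sequence of random graphs as described in the context, with $\lim_{n\to\infty}|V_n|=\infty$, and assume the homogeneity condition: for each $n$, $D_{n,k}$ has the same distribution as $D_{n,1}$ for all $k\in V_n$, and for all distinct $k,\ell\in V_n$ the pair $(D_{n,k},D_{n,\ell})$ has the same joint distribution as $(D_{n,1},D_{n,2})$. Fix $d\in\{0,1,2,\ldots\}$. Then there exists a constant $L(d)\in\mathbb{R}$ with $P_n(d)\to L(d)$ in probability as $n\to\infty$ if and only if $$\lim_{n\to\infty}\mathbb{P}[D_{n,1}=d]=L(d)\quad\text{and}\quad \lim_{n\to\infty}\mathrm{Cov}\big[\mathbf{1}[D_{n,1}=d],\mathbf{1}[D_{n,2}=d]\big]=0.$$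
   Context: All random variables are defined on a common probability space $(\Omega,\mathcal{F},\mathbb{P})$. For each $n=2,3,\ldots$, $\mathbb{G}_n$ is a random (possibly directed, self-loops allowed) graph on the deterministic finite node set $V_n=\{1,\ldots,k_n\}$ with $k_n\ge 2$, determined by $\{0,1\}$-valued edge random variables $\{\chi_n(k,\ell),\ k,\ell\in V_n\}$ ($\chi_n(k,\ell)=1$ iff there is an edge from $k$ to $\ell$). The degree of node $k$ is $D_{n,k}=\sum_{\ell\in V_n}\chi_n(k,\ell)$. For $d=0,1,\ldots$, $N_n(d)=\sum_{k\in V_n}\mathbf{1}[D_{n,k}=d]$ and $P_n(d)=N_n(d)/|V_n|$ is the fraction of nodes with degree $d$. *)

From HB Require Import structures.
From mathcomp Require Import all_boot all_order all_algebra.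
From mathcomp Require Import all_classical all_reals all_analysis.
Set Implicit Arguments. Unset Strict Implicit. Unset Printing Implicit Defensive.
Import Order.TTheory GRing.Theory Num.Theory.

(* A random graph on node set 'I_M (node i+1 of the
   paper is the ordinal i) is given by boolean edge variables chi k l : T -> bool. *)

Definition degree {T : Type} {M : nat} (chi : 'I_M -> 'I_M -> T -> bool)
  (k : 'I_M) (w : T) : nat := (\sum_(l < M) chi k l w)%N.

Definition Ncount {T : Type} {M : nat} (chi : 'I_M -> 'I_M -> T -> bool)
  (d : nat) (w : T) : nat := (\sum_(k < M) (degree chi k w == d))%N.

Definition Pfrac {R : realType} {T : Type} {M : nat}
  (chi : 'I_M -> 'I_M -> T -> bool) (d : nat) (w : T) : R :=
  ((Ncount chi d w)%:R / M%:R)%R.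

Definition node2 (m : nat) : 'I_m.+2 := @Ordinal m.+2 1 isT.

From HB Require Import structures.
From mathcomp Require Import all_boot all_order all_algebra.
From mathcomp Require Import all_classical all_reals all_analysis.
From mathcomp Require Import measurable_realfun.
From mathcomp Require Import ring lra.
Import Order.TTheory GRing.Theory Num.Theory.
Import numFieldNormedType.Exports.
Local Open Scope classical_set_scope.
Local Open Scope ring_scope.

(* Write A_k for the event {D_k = d}, p = P(A_1) and q = P(A_1 /\ A_2).  The
   fraction P(d) is the empirical frequency of the A_k, and homogeneity makes
   these events exchangeable in pairs, so expanding the square gives
     E[(P(d) - L)^2] = (p - L)^2 + p (1 - p) / |V| + (1 - 1/|V|) (q - p^2),
   where q - p^2 is the covariance of the statement.  As P(d) - L is bounded,
   convergence in probability is equivalent to convergence in mean square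
   (Markov's inequality one way, splitting on {|P(d) - L| > eps} the other).
   The last two terms form the variance of P(d), hence are nonnegative, and the
   middle one vanishes as |V| grows, so the mean-square error tends to 0 iff
   p -> L and q - p^2 -> 0. *)

Section real_sequences.
Context {R : realType}.

Lemma cvgEFinP {I : Type} {F : set_system I} {FF : Filter F} (u : I -> R) (a : R) :
  (fun i => (u i)%:E) @ F --> a%:E <-> u @ F --> a.
Proof.
rewrite fine_cvgP; split=> [[] //|ua]; split=> //.
exact: nearW.
Qed.

Lemma cvg_sqr0P (u : nat -> R) (a : R) :
  (fun n => (u n - a) ^+ 2) @ \oo --> 0 <-> u @ \oo --> a.
Proof.
split=> [u2|ua]; last first.
  by rewrite -(mulr0 0) -(subrr a); apply: cvgM; apply: cvgB => //; exact: cvg_cst.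
apply/subr_cvg0/norm_cvg0P.
have -> : (fun n => `|u n - a|) = Num.sqrt \o (fun n => (u n - a) ^+ 2).
  by apply/funext => n; rewrite /= sqrtr_sqr.
by rewrite -sqrtr0; apply: cvg_comp u2 _; exact: sqrt_continuous.
Qed.

Lemma bias_variance_cvg0P (p c x : nat -> R) (L : R) :
  x @ \oo --> 0 -> (forall n, x n != 1) ->
  (forall n, 0 <= p n * (1 - p n) * x n + (1 - x n) * c n) ->
  (fun n => (p n - L) ^+ 2 + (p n * (1 - p n) * x n + (1 - x n) * c n)) @ \oo --> 0
  <-> p @ \oo --> L /\ c @ \oo --> 0.
Proof.
move=> x0 x_neq1 var_ge0.
have one_x : (fun n => 1 - x n) @ \oo --> (1 : R).
  by rewrite -[X in _ --> X](subr0 (1 : R)); apply: cvgB => //; exact: cvg_cst.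
have binom_cvg0 : p @ \oo --> L -> (fun n => p n * (1 - p n) * x n) @ \oo --> 0.
  move=> pL; rewrite -(mulr0 (L * (1 - L))).
  by apply: cvgM => //; apply: cvgM => //; apply: cvgB => //; exact: cvg_cst.
split=> [mse0|[pL c0]]; last first.
  rewrite -[X in _ --> X](addr0 0); apply: cvgD; first exact/cvg_sqr0P.
  rewrite -[X in _ --> X](addr0 0); apply: cvgD; first exact: binom_cvg0.
  by rewrite -(mulr0 1); apply: cvgM.
have bias0 : (fun n => (p n - L) ^+ 2) @ \oo --> 0.
  apply: (squeeze_cvgr _ (cvg_cst 0) mse0); apply: nearW => n /=.
  by rewrite sqr_ge0 lerDl var_ge0.
have pL : p @ \oo --> L by exact/cvg_sqr0P.
split=> //.
have scaled_c0 : (fun n => (1 - x n) * c n) @ \oo --> 0.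
  have -> : (fun n => (1 - x n) * c n) = (fun n =>
      (p n - L) ^+ 2 + (p n * (1 - p n) * x n + (1 - x n) * c n)
      - (p n - L) ^+ 2 - p n * (1 - p n) * x n).
    by apply/funext => n; ring.
  by rewrite -[X in _ --> X](subrr 0) -[X in _ --> X - _](subrr 0); apply: cvgB;
    [apply: cvgB|exact: binom_cvg0].
have -> : c = (fun n => (1 - x n) * c n * (1 - x n)^-1).
  by apply/funext => n; rewrite mulrC mulKf // subr_eq0 eq_sym.
by rewrite -(mul0r 1^-1); apply: cvgM => //; apply: cvgV => //; exact: oner_neq0.
Qed.

Lemma tail_sandwich_cvg0P (t : R -> nat -> R) (s : nat -> R) (C : R) :
  (forall eps n, 0 <= t eps n) -> (forall n, 0 <= s n) ->
  (forall eps n, 0 < eps -> eps ^+ 2 * t eps n <= s n) ->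
  (forall eps n, 0 < eps -> s n <= eps ^+ 2 + C * t eps n) ->
  (forall eps, 0 < eps -> t eps @ \oo --> 0) <-> s @ \oo --> 0.
Proof.
move=> t_ge0 s_ge0 s_lb s_ub; split=> [t0|s0 eps eps0].
- apply/cvgr0Pnorm_le => delta delta0.
  pose eps := Num.sqrt (delta / 2).
  have eps0 : 0 < eps by rewrite sqrtr_gt0 divr_gt0.
  have eps2 : eps ^+ 2 = delta / 2 by rewrite sqr_sqrtr // ltW // divr_gt0.
  have Ct0 : (fun n => C * t eps n) @ \oo --> 0.
    by rewrite -(mulr0 C); apply: cvgM; [exact: cvg_cst | exact: t0].
  move: Ct0 => /cvgr0Pnorm_le /(_ (delta / 2)) [|N _ CtN]; first by rewrite divr_gt0.
  exists N => // n /CtN /= Ct_small.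
  rewrite ger0_norm // (le_trans (s_ub eps n eps0)) // eps2.
  by have := le_trans (ler_norm _) Ct_small; lra.
- apply: (squeeze_cvgr _ (cvg_cst 0) (h := fun n => s n / eps ^+ 2)).
    apply: nearW => n /=; rewrite t_ge0 /= ler_pdivlMr ?exprn_gt0 // mulrC.
    exact: s_lb.
  by rewrite -(mul0r (eps ^+ 2)^-1); apply: cvgM => //; exact: cvg_cst.
Qed.

Lemma cvg_invr_unbounded (u : nat -> nat) :
  (forall N, \forall n \near \oo, (N <= u n)%N) ->
  (fun n => (u n)%:R^-1 : R) @ \oo --> 0.
Proof.
move=> u_unbounded; apply/cvgr0Pnorm_le => e e0.
apply: filterS (u_unbounded (Num.truncn e^-1).+1) => n le_u.
rewrite ger0_norm ?invr_ge0 // -[e]invrK lef_pV2 ?posrE ?invr_gt0 ?ltr0n //.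
  by rewrite ltW // (lt_le_trans (Num.Theory.truncnS_gt _)) // ler_nat.
exact: leq_trans le_u.
Qed.

End real_sequences.

Lemma ler_sqr_normr {R : realDomainType} (a x : R) :
  0 <= a -> (a ^+ 2 <= x ^+ 2) = (a <= `|x|).
Proof. by move=> a0; rewrite -[x ^+ 2]real_normK ?num_real // ler_sqr. Qed.

Lemma ler_sqr_norml {R : realDomainType} (a x : R) :
  0 <= a -> (x ^+ 2 <= a ^+ 2) = (`|x| <= a).
Proof. by move=> a0; rewrite -[x ^+ 2]real_normK ?num_real // ler_sqr. Qed.

Section expectation_facts.
Context {d : measure_display} {T : measurableType d} {R : realType}
  (P : probability T R).

Lemma Lfun1_indic (A : set T) : measurable A -> (\1_A : T -> R) \in Lfun P 1.
Proof. by move=> mA; apply/Lfun1_integrable; exact: integrable_indic. Qed.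

Lemma expectation_sumr (I : Type) (r : seq I) (X : I -> T -> R) :
  (forall i, X i \in Lfun P 1) ->
  ('E_P[\sum_(i <- r) X i] = \sum_(i <- r) 'E_P[X i])%E.
Proof.
move=> X1; elim: r => [|i r IH]; first by rewrite !big_nil expectation_cst.
by rewrite !big_cons expectationD ?IH ?rpred_sum.
Qed.

Lemma measure_fineK (A : set T) : measurable A -> (fine (P A))%:E = P A.
Proof. by move=> mA; rewrite fineK // fin_num_measure. Qed.

Lemma measurable_norm_gt (X : T -> R) (eps : R) :
  measurable_fun setT X -> measurable [set w | eps < `|X w|].
Proof.
move=> mX; have mN : measurable_fun setT (fun w => `|X w|) by exact: measurableT_comp.
have := mN measurableT _ (@measurable_itv R `]eps, +oo[).
by rewrite setTI; congr measurable; apply/seteqP; split => w /=;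
  rewrite in_itv /= andbT.
Qed.

Lemma tail_le_expectation_sqr (X : T -> R) (eps : R) :
  measurable_fun setT X -> 0 < eps ->
  ((eps ^+ 2)%:E * P [set w | (eps < `|X w|)%R] <= 'E_P[(fun w => X w ^+ 2)%R])%E.
Proof.
move=> mX eps0; have mB := measurable_norm_gt _ eps mX.
rewrite -expectation_indic // -expectationZl ?Lfun1_indic //.
apply: expectation_le => //.
- by apply: measurable_funM => //; exact: measurable_indic.
- exact: measurable_funX.
- by move=> w; rewrite /= mulr_ge0 ?sqr_ge0.
- by move=> w; exact: sqr_ge0.
apply/aeW => w; rewrite /= indicE; case: (boolP (w \in _)) => [|_].
  by rewrite inE /= mul1r ler_sqr_normr ?(ltW eps0) // => /ltW.
by rewrite /= mul0r sqr_ge0.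
Qed.

Lemma expectation_sqr_le_tail (X : T -> R) (C eps : R) :
  measurable_fun setT X -> (forall w, `|X w| <= C) -> 0 <= eps ->
  ('E_P[(fun w => X w ^+ 2)%R] <=
   (eps ^+ 2)%:E + (C ^+ 2)%:E * P [set w | (eps < `|X w|)%R])%E.
Proof.
move=> mX XC eps0; have mB := measurable_norm_gt _ eps mX.
rewrite -expectation_indic // -expectationZl ?Lfun1_indic //.
rewrite -[X in (X + _)%E](expectation_cst P) -expectationD ?Lfun_cst //; last first.
  by apply: Lfun_scale => //; exact: Lfun1_indic.
apply: expectation_le => //.
- exact: measurable_funX.
- by apply: measurable_funD => //; apply: measurable_funM.
- by move=> w; exact: sqr_ge0.
- move=> w /=; apply: addr_ge0; first exact: sqr_ge0.
  by apply: mulr_ge0; [rewrite indicE ler0n | exact: sqr_ge0].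
apply/aeW => w; rewrite /= indicE; case: (boolP (w \in _)) => [|].
  by rewrite /= mul1r ler_wpDl ?sqr_ge0 // ler_sqr_norml ?XC // (le_trans _ (XC w)).
by rewrite /= mul0r addr0 notin_setE /= ler_sqr_norml // leNgt => /negP.
Qed.

Lemma bounded_cvg_in_probabilityP (X : nat -> T -> R) (C : R) :
  (forall n, measurable_fun setT (X n)) -> (forall n w, `|X n w| <= C) ->
  (forall eps, 0 < eps -> (fun n => P [set w | eps < `|X n w|]) @ \oo --> 0%E) <->
  ((fun n => 'E_P[(fun w => X n w ^+ 2)%R]) @ \oo --> 0)%E.
Proof.
move=> mX XC.
pose tail eps n := fine (P [set w | eps < `|X n w|]).
pose m2 n := fine ('E_P[(fun w => X n w ^+ 2)%R])%E.
have tailE eps n : P [set w | eps < `|X n w|] = (tail eps n)%:E.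
  by rewrite measure_fineK //; exact: measurable_norm_gt.
have E_fin n : ('E_P[(fun w => X n w ^+ 2)%R])%E \is a fin_num.
  rewrite ge0_fin_numE; last by apply: expectation_ge0 => w; exact: sqr_ge0.
  apply: le_lt_trans (expectation_sqr_le_tail (X n) C 0 (mX n) (XC n) (lexx 0)) _.
  by rewrite tailE -EFinM -EFinD ltry.
have m2E n : ('E_P[(fun w => X n w ^+ 2)%R])%E = (m2 n)%:E by rewrite fineK.
have -> : (fun n => ('E_P[(fun w => X n w ^+ 2)%R])%E) = (fun n => (m2 n)%:E).
  by apply/funext => n; exact: m2E.
have tailF eps :
    (fun n => P [set w | eps < `|X n w|]) = (fun n => (tail eps n)%:E).
  by apply/funext => n; exact: tailE.
rewrite cvgEFinP; apply: iff_trans (tail_sandwich_cvg0P tail m2 (C ^+ 2) _ _ _ _).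
- by split=> t0 eps /t0; rewrite tailF cvgEFinP.
- by move=> eps n; exact: fine_ge0.
- by move=> n; rewrite fine_ge0 // expectation_ge0 // => w; exact: sqr_ge0.
- move=> eps n eps0; rewrite -lee_fin -m2E (EFinM (eps ^+ 2)) -tailE.
  exact: tail_le_expectation_sqr.
- move=> eps n eps0; rewrite -lee_fin -m2E EFinD (EFinM (C ^+ 2)) -tailE.
  exact/expectation_sqr_le_tail/ltW.
Qed.

Lemma covariance_indic (A B : set T) : measurable A -> measurable B ->
  covariance P (\1_A : T -> R) (\1_B : T -> R) = (P (A `&` B) - P A * P B)%E.
Proof.
move=> mA mB; have indicAB : (\1_A * \1_B : T -> R) = \1_(A `&` B).
  by apply/funext => w; rewrite /= indicI.
have mAB : measurable (A `&` B) by exact: measurableI.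
by rewrite covarianceE ?indicAB ?Lfun1_indic // !expectation_indic.
Qed.

End expectation_facts.

Definition frequency {T : Type} {R : fieldType} {M : nat} (A : 'I_M -> set T)
  (w : T) : R := (\sum_(k < M) \1_(A k) w) / M%:R.

Lemma frequency_ge0_le1 {T : Type} {R : realFieldType} {M : nat}
    (A : 'I_M -> set T) (w : T) :
  0 <= (frequency A w : R) <= 1.
Proof.
have sum_ge0 : 0 <= \sum_(k < M) (\1_(A k) w : R).
  by apply: sumr_ge0 => k _; rewrite indicE ler0n.
have sum_leM : \sum_(k < M) (\1_(A k) w : R) <= M%:R.
  rewrite -[X in _ <= X%:R]card_ord -sumr_const.
  by apply: ler_sum => k _; rewrite indicE lern1 leq_b1.
rewrite /frequency; have [M0|M_gt0] := posnP M.
  by rewrite [M%:R](_ : _ = 0) ?M0 // invr0 mulr0 lexx ler01.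
by rewrite divr_ge0 //= ler_pdivrMr ?ltr0n // mul1r.
Qed.

Section exchangeable_events.
Context {d : measure_display} {T : measurableType d} {R : realType}
  (P : probability T R).
Context {M : nat} (A : 'I_M -> set T) {p q : R}.
Hypothesis mA : forall k, measurable (A k).
Hypothesis PA : forall k, P (A k) = p%:E.
Hypothesis PAA : forall k l, k != l -> P (A k `&` A l) = q%:E.

Lemma measurable_frequency : measurable_fun setT (frequency A : T -> R).
Proof.
apply: measurable_funM => //; apply: measurable_sum => k.
exact: measurable_indic.
Qed.

Lemma expectation_count :
  ('E_P[\sum_(k < M) \1_(A k)] = (M%:R * p)%:E)%E.
Proof.
rewrite expectation_sumr => [|k]; last exact: Lfun1_indic.
under eq_bigr do rewrite expectation_indic // PA.
by rewrite (sumEFin _ _ (fun=> p)) sumr_const card_ord mulr_natl.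
Qed.

Lemma expectation_pair_count :
  ('E_P[\sum_(k < M) \sum_(l < M) \1_(A k `&` A l)] =
   (M%:R * (p + M.-1%:R * q))%:E)%E.
Proof.
have mAA k l : measurable (A k `&` A l) by exact: measurableI.
have PAkl k l : P (A k `&` A l) = (if k == l then p else q)%:E.
  by case: eqVneq => [<-|/PAA //]; rewrite setIid PA.
have row k : \sum_(l < M) (if k == l then p else q) = p + M.-1%:R * q.
  rewrite (bigD1 k) //= eqxx; congr (_ + _).
  under eq_bigr => l /negbTE lk do rewrite eq_sym lk.
  by rewrite sumr_const cardC1 card_ord mulr_natl.
rewrite expectation_sumr => [|k]; last by apply: rpred_sum => l _; exact/Lfun1_indic/mAA.
under eq_bigr => k _.
  rewrite expectation_sumr => [|l]; last exact/Lfun1_indic/mAA.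
  under eq_bigr => l _ do rewrite (expectation_indic P (mAA k l)) PAkl.
  rewrite sumEFin row.
  over.
by rewrite (sumEFin _ _ (fun=> _)) sumr_const card_ord !mulr_natl.
Qed.

Lemma expectation_sqr_frequencyB (L : R) : (0 < M)%N ->
  ('E_P[(fun w => (frequency A w - L) ^+ 2)%R] =
   ((p - L) ^+ 2 + (p * (1 - p) * M%:R^-1 + (1 - M%:R^-1) * (q - p ^+ 2)))%:E)%E.
Proof.
move=> M_gt0; have M_neq0 : M%:R != 0 :> R by rewrite pnatr_eq0 -lt0n.
set count := \sum_(k < M) (\1_(A k) : T -> R).
set pairs := \sum_(k < M) \sum_(l < M) (\1_(A k `&` A l) : T -> R).
have count1 : count \in Lfun P 1 by apply: rpred_sum => k _; exact: Lfun1_indic.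
have pairs1 : pairs \in Lfun P 1.
  by apply: rpred_sum => k _; apply: rpred_sum => l _; exact/Lfun1_indic/measurableI.
have pairsE w : pairs w = count w ^+ 2.
  rewrite /pairs /count !fct_sumE expr2 mulr_suml; apply: eq_bigr => k _.
  by rewrite fct_sumE mulr_sumr; apply: eq_bigr => l _; rewrite indicI.
have -> : (fun w => (frequency A w - L) ^+ 2) =
    ((M%:R ^+ 2)^-1 \o* pairs) \+ ((- (2 * L / M%:R)) \o* count \+ cst (L ^+ 2)).
  apply/funext => w; rewrite /= pairsE /frequency /count fct_sumE.
  by field.
rewrite expectationD ?rpredD ?Lfun_cst ?Lfun_scale //.
rewrite expectationD ?Lfun_cst ?Lfun_scale //.
rewrite expectationZl // (expectationZl _ count1) (expectation_cst P).
rewrite expectation_pair_count expectation_count -!EFinM -!EFinD; congr EFin.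
have -> : M.-1%:R = M%:R - 1 :> R by rewrite -[in RHS](prednK M_gt0) -natr1 addrK.
by field.
Qed.

Lemma frequency_variance_ge0 : (0 < M)%N ->
  0 <= p * (1 - p) * M%:R^-1 + (1 - M%:R^-1) * (q - p ^+ 2).
Proof.
move=> M_gt0; rewrite -lee_fin.
have := expectation_sqr_frequencyB p M_gt0; rewrite subrr expr0n /= add0r => <-.
by apply: expectation_ge0 => w; exact: sqr_ge0.
Qed.

End exchangeable_events.

Lemma measurable_natr_count {d} {T : measurableType d} (R : realType) {I : finType}
    (b : I -> T -> bool) :
  (forall i, measurable [set w | b i w]) ->
  measurable_fun setT (fun w => ((\sum_i b i w)%N%:R : R)).
Proof.
move=> mb; under eq_fun do rewrite natr_sum.
apply: measurable_sum => i.
have -> : (fun w => (b i w)%:R : R) = \1_[set w | b i w].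
  by apply/funext => w; rewrite indicE; case: (boolP (b i w)) => [bw|/negP bw];
    [rewrite mem_set | rewrite memNset].
exact: measurable_indic.
Qed.

Lemma measurable_natr_eq {d} {T : measurableType d} {R : realType} (f : T -> nat)
    (n : nat) :
  measurable_fun setT (fun w => (f w)%:R : R) -> measurable [set w | f w = n].
Proof.
move=> mf; have := mf measurableT _ (measurable_set1 n%:R).
rewrite setTI; congr measurable; apply/seteqP; split=> w /=.
  by move/eqP; rewrite eqr_nat => /eqP.
by move=> ->.
Qed.

Lemma Pfrac_frequency (R : realType) {T : Type} {M : nat}
    (chi : 'I_M -> 'I_M -> T -> bool) (d : nat) :
  Pfrac chi d = frequency (fun k => [set w | degree chi k w = d]) :> (T -> R).
Proof.
apply/funext => w; rewrite /Pfrac /frequency /Ncount natr_sum.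
congr (_ / _); apply: eq_bigr => k _; rewrite indicE.
by case: eqP => [deg_d|deg_d]; [rewrite mem_set | rewrite memNset].
Qed.

Lemma Pfrac_ge0_le1 (R : realType) {T : Type} {M : nat}
    (chi : 'I_M -> 'I_M -> T -> bool) (d : nat) (w : T) :
  0 <= (Pfrac chi d w : R) <= 1.
Proof. by rewrite Pfrac_frequency frequency_ge0_le1. Qed.

Definition degree_prob {dT} {T : measurableType dT} {R : realType}
    (P : probability T R) {M : nat} (chi : 'I_M.+1 -> 'I_M.+1 -> T -> bool)
    (d : nat) : R :=
  fine (P [set w | degree chi ord0 w = d]).

Definition degree_pair_prob {dT} {T : measurableType dT} {R : realType}
    (P : probability T R) {M : nat} (chi : 'I_M.+2 -> 'I_M.+2 -> T -> bool)
    (d : nat) : R :=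
  fine (P [set w | degree chi ord0 w = d /\ degree chi (node2 M) w = d]).

Section homogeneous_graph.
Context {dT : measure_display} {T : measurableType dT} {R : realType}
  (P : probability T R).
Context {M : nat} (chi : 'I_M.+2 -> 'I_M.+2 -> T -> bool) (d : nat).
Hypothesis chi_meas : forall k l, measurable [set w | chi k l w].
Hypothesis homog1 : forall k (a : nat),
  P [set w | degree chi k w = a] = P [set w | degree chi ord0 w = a].
Hypothesis homog2 : forall k l, k != l -> forall a b : nat,
  P [set w | degree chi k w = a /\ degree chi l w = b] =
  P [set w | degree chi ord0 w = a /\ degree chi (node2 M) w = b].

Let A k := [set w | degree chi k w = d].
Let p := degree_prob P chi d.
Let q := degree_pair_prob P chi d.
Let x : R := (M.+2)%:R^-1.

Let mA k : measurable (A k).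
Proof. exact/(measurable_natr_eq (R := R))/measurable_natr_count. Qed.

Let PA k : P (A k) = p%:E.
Proof. by rewrite /A homog1 measure_fineK //; exact: mA. Qed.

Let PAA k l : k != l -> P (A k `&` A l) = q%:E.
Proof.
by move=> kl; rewrite [LHS]homog2 // measure_fineK //; apply: measurableI; exact: mA.
Qed.

Lemma degree_probE : P (A ord0) = p%:E.
Proof. exact: PA. Qed.

Lemma covariance_degree_indic :
  covariance P (\1_(A ord0) : T -> R) (\1_(A (node2 M)) : T -> R) =
  (q - p ^+ 2)%:E.
Proof. by rewrite covariance_indic ?mA // !PA PAA // -EFinM -EFinB expr2. Qed.

Lemma measurable_Pfrac : measurable_fun setT (Pfrac chi d : T -> R).
Proof. by rewrite Pfrac_frequency; exact: measurable_frequency. Qed.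

Lemma expectation_sqr_PfracB (L : R) :
  ('E_P[(fun w => (Pfrac chi d w - L) ^+ 2)%R] =
   ((p - L) ^+ 2 + (p * (1 - p) * x + (1 - x) * (q - p ^+ 2)))%:E)%E.
Proof. by rewrite Pfrac_frequency (expectation_sqr_frequencyB P A mA PA PAA). Qed.

Lemma Pfrac_variance_ge0 : 0 <= p * (1 - p) * x + (1 - x) * (q - p ^+ 2).
Proof. exact: frequency_variance_ge0 mA PA PAA _. Qed.

End homogeneous_graph.

Theorem proposition1 (dT : measure_display) (T : measurableType dT)
  (R : realType) (P : probability T R)
  (m : nat -> nat)
  (chi : forall n : nat, 'I_(m n).+2 -> 'I_(m n).+2 -> T -> bool)
  (chi_meas : forall n k l, measurable [set w | chi n k l w])
  (V_unbounded : forall N : nat, \forall n \near \oo, (N <= (m n).+2)%N)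
  (homog1 : forall n (k : 'I_(m n).+2) (a : nat),
     P [set w | degree (chi n) k w = a] = P [set w | degree (chi n) ord0 w = a])
  (homog2 : forall n (k l : 'I_(m n).+2), k != l -> forall a b : nat,
     P [set w | degree (chi n) k w = a /\ degree (chi n) l w = b] =
     P [set w | degree (chi n) ord0 w = a /\ degree (chi n) (node2 (m n)) w = b])
  (d : nat) (L : R) :
  (forall eps : R, 0 < eps ->
     (fun n => P [set w | eps < `| Pfrac (chi n) d w - L |]) @ \oo --> 0%E)
  <->
  ((fun n => P [set w | degree (chi n) ord0 w = d]) @ \oo --> L%:E /\
   (fun n => covariance P
       (\1_[set w | degree (chi n) ord0 w = d] : T -> R)
       (\1_[set w | degree (chi n) (node2 (m n)) w = d] : T -> R)) @ \oo --> 0%E).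
Proof.
pose p n := degree_prob P (chi n) d.
pose q n := degree_pair_prob P (chi n) d.
pose x n : R := ((m n).+2)%:R^-1.
rewrite (_ : (fun n => P [set w | degree (chi n) ord0 w = d]) = fun n => (p n)%:E);
  last by apply/funext => n; exact: degree_probE (chi_meas n) (homog1 n).
rewrite (_ : (fun n => covariance P _ _) = fun n => (q n - p n ^+ 2)%:E); last first.
  by apply/funext => n; exact: covariance_degree_indic (chi_meas n) (homog1 n) (homog2 n).
rewrite !cvgEFinP.
apply: iff_trans (bounded_cvg_in_probabilityP P
  (fun n w => Pfrac (chi n) d w - L) (1 + `|L|) _ _) _.
- by move=> n; apply: measurable_funB => //; exact: measurable_Pfrac.
- move=> n w; have /andP[Pfrac_ge0 Pfrac_le1] := Pfrac_ge0_le1 R (chi n) d w.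
  by rewrite (le_trans (ler_normB _ _)) // lerD2r ger0_norm.
under eq_fun => n.
  rewrite (expectation_sqr_PfracB P (chi n) d (chi_meas n) (homog1 n) (homog2 n)).
  over.
rewrite cvgEFinP.
apply: (bias_variance_cvg0P p (fun n => q n - p n ^+ 2) x L).
- exact: cvg_invr_unbounded.
- by move=> n; rewrite invr_eq1 pnatr_eq1.
- by move=> n; exact: Pfrac_variance_ge0 (chi_meas n) (homog1 n) (homog2 n).
Qed.
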